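(* Let $T$ be a complete theory with monster model $\mathbb{M}$, $S\subseteq\mathbb{M}$ a small set, and $(a_i:i\in\mathbb{Q})$ an $S$-indiscernible sequence of (finite or small infinite) tuples. Let $I,J\subseteq\mathbb{Q}$ be finite with $I\cap J=\emptyset$, $I=\{i_1,\ldots,i_n\}$ with $i_1<\cdots<i_n$. For each $t\in[n]$ let $i'_t\in\mathbb{Q}$ be such that $i_t<i'_t$ and $$\operatorname{qftp}_<(i'_t/J\cup\{i_s:s\in[n]\setminus\{t\}\})=\operatorname{qftp}_<(i_t/J\cup\{i_s:s\in[n]\setminus\{t\}\}).$$ Then $\operatorname{dist}_{S\cup(a_i)_{i\in J}}\big((a_{i_1},\ldots,a_{i_n}),(a_{i'_1},\ldots,a_{i'_n})\big)\le1$.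
   Context: A symmetric formula $\theta(x,y)$ with parameters ($x,y$ of the same sorts) is thick if there is no sequence $(c_i)_{i\in\omega}$ with $\models\neg\theta(c_i,c_j)$ for all $i<j$. $\Theta_S(x,y)$ is the set of all thick formulas with parameters from $S$ in finite subtuples of corresponding variables of $x,y$. The Lascar distance $\operatorname{dist}_S(a,b)$ is the least $n\in\omega$ such that there are $a_0=a,a_1,\ldots,a_n=b$ with $\models\Theta_S(a_i,a_{i+1})$ for all $i<n$ (or $\infty$ if none exists). $\operatorname{qftp}_<$ denotes quantifier-free type in the order of $\mathbb{Q}$; $[n]=\{1,\ldots,n\}$. *)

From mathcomp Require Import all_boot all_order all_algebra.
From Stdlib Require Lists.List.
Set Implicit Arguments. Unset Strict Implicit. Unset Printing Implicit Defensive.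
Import Order.TTheory GRing.Theory Num.Theory.

Record signature := Signature {
  fsym : Type; rsym : Type;
  farity : fsym -> nat; rarity : rsym -> nat }.
Arguments farity : clear implicits. Arguments rarity : clear implicits.

Inductive term (L : signature) (V : Type) : Type :=
| tvar : V -> term L V
| tapp : forall f : fsym L, ('I_(farity L f) -> term L V) -> term L V.

(* formulas with free variables in V (quantifiers bind via option) *)
Inductive formula (L : signature) : Type -> Type :=
| frel : forall V (r : rsym L), ('I_(rarity L r) -> term L V) -> formula L V
| feq : forall V, term L V -> term L V -> formula L V
| fneg : forall V, formula L V -> formula L V
| fand : forall V, formula L V -> formula L V -> formula L V
| fex : forall V, formula L (option V) -> formula L V.

Record structure (L : signature) := Structure {
  carrier :> Type;
  finterp : forall f : fsym L, ('I_(farity L f) -> carrier) -> carrier;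
  rinterp : forall r : rsym L, ('I_(rarity L r) -> carrier) -> Prop }.
Arguments finterp : clear implicits. Arguments rinterp : clear implicits.

Fixpoint teval (L : signature) (M : structure L) (V : Type) (e : V -> M)
  (t : term L V) : M :=
  match t with
  | tvar v => e v
  | tapp f args => finterp L M f (fun k => teval e (args k))
  end.

Fixpoint sat (L : signature) (M : structure L) (V : Type) (phi : formula L V)
  : (V -> M) -> Prop :=
  match phi in formula _ V0 return (V0 -> M) -> Prop with
  | frel _ r args => fun e => rinterp L M r (fun k => teval e (args k))
  | feq _ t1 t2 => fun e => teval e t1 = teval e t2
  | fneg _ psi => fun e => ~ sat psi e
  | fand _ p q => fun e => sat p e /\ sat q e
  | fex _ psi => fun e => exists m : M,
      sat psi (fun o => match o with Some v => e v | None => m end)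
  end.

Definition pformula (L : signature) (M : structure L) (A : M -> Prop) (V : Type) :=
  formula L (V + {m : M | A m}).

Definition penv (L : signature) (M : structure L) (A : M -> Prop) (V : Type)
  (e : V -> M) : V + {m : M | A m} -> M :=
  fun z => match z with inl v => e v | inr p => sval p end.

Definition psat (L : signature) (M : structure L) (A : M -> Prop) (V : Type)
  (phi : pformula A V) (e : V -> M) : Prop := sat phi (penv e).

(* kappa is represented by a type K; a type is small if |Y| < |K|,
   i.e. K does not inject into Y. *)
Definition smallT (K Y : Type) : Prop := ~ exists f : K -> Y, injective f.
Definition small (K : Type) (M : Type) (A : M -> Prop) : Prop :=
  smallT K {m : M | A m}.

Definition automorphism (L : signature) (M : structure L) (s : M -> M) : Prop :=
  bijective s /\
  (forall f args, s (finterp L M f args) = finterp L M f (fun k => s (args k))) /\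
  (forall r args, rinterp L M r args <-> rinterp L M r (fun k => s (args k))).

Definition saturated (L : signature) (K : Type) (M : structure L) : Prop :=
  forall A : M -> Prop, small K A ->
  forall p : pformula A unit -> Prop,
    (forall l : seq (pformula A unit), (forall phi, Stdlib.Lists.List.In phi l -> p phi) ->
       exists m : M, forall phi, Stdlib.Lists.List.In phi l -> psat phi (fun _ => m)) ->
    exists m : M, forall phi, p phi -> psat phi (fun _ => m).

Definition strongly_homogeneous (L : signature) (K : Type) (M : structure L) : Prop :=
  forall A : M -> Prop, small K A ->
  forall f : {m : M | A m} -> M,
    (forall phi : formula L {m : M | A m}, sat phi (@sval _ _) <-> sat phi f) ->
    exists s : M -> M, automorphism s /\ forall x, s (sval x) = f x.

(* M is a monster model (kappa-saturated, strongly kappa-homogeneous,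
   kappa > |L| + aleph_0) of its complete theory T = Th(M). *)
Definition monster (L : signature) (K : Type) (M : structure L) : Prop :=
  smallT K ((fsym L + rsym L) + nat) /\ saturated K M /\ strongly_homogeneous K M.

Definition increasing (k : nat) (i : 'I_k -> rat) : Prop :=
  forall s t : 'I_k, (s < t)%N -> (i s < i t)%R.

Definition indiscernible (L : signature) (M : structure L) (S : M -> Prop)
  (X : Type) (a : rat -> X -> M) : Prop :=
  forall (k : nat) (i j : 'I_k -> rat), increasing i -> increasing j ->
  forall phi : pformula S ('I_k * X),
    psat phi (fun p => a (i p.1) p.2) <-> psat phi (fun p => a (j p.1) p.2).

Definition pair_env (M : Type) (X : Type) (x y : X -> M) : X + X -> M :=
  fun z => match z with inl u => x u | inr u => y u end.

Definition symmetric_f (L : signature) (M : structure L) (A : M -> Prop) (X : Type)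
  (th : pformula A (X + X)) : Prop :=
  forall x y : X -> M, psat th (pair_env x y) <-> psat th (pair_env y x).

Definition thick (L : signature) (M : structure L) (A : M -> Prop) (X : Type)
  (th : pformula A (X + X)) : Prop :=
  ~ exists c : nat -> X -> M,
      forall i j : nat, (i < j)%N -> ~ psat th (pair_env (c i) (c j)).

Definition Theta (L : signature) (M : structure L) (A : M -> Prop) (X : Type)
  (x y : X -> M) : Prop :=
  forall th : pformula A (X + X), symmetric_f th -> thick th ->
    psat th (pair_env x y).

Definition lascar_dist_le (L : signature) (M : structure L) (A : M -> Prop)
  (X : Type) (x y : X -> M) (n : nat) : Prop :=
  exists m : nat, (m <= n)%N /\
    exists c : nat -> X -> M, c 0%N = x /\ c m = y /\
      forall i : nat, (i < m)%N -> Theta A (c i) (c i.+1).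

Definition qftp_eq (B : rat -> Prop) (x y : rat) : Prop :=
  forall j, B j ->
    ((x < j)%R <-> (y < j)%R) /\ ((j < x)%R <-> (j < y)%R) /\ (x = j <-> y = j).

(* Put q_m(t) = I t + (1 - 1/(m+1)) (I' t - I t).  By the qftp hypothesis the
   intervals [I t, I' t] are pairwise disjoint, ordered like t, and miss J.  For
   k < l the map of Q that stretches each [I t, I' t] affinely onto
   [q_k(t), q_l(t)] and fixes every other point is order preserving and fixes J,
   so indiscernibility gives (a_{q_k}, a_{q_l}) the type of (a_I, a_{I'}) over
   S together with (a_j)_{j in J}.  A thick formula failing on (a_I, a_{I'})
   would therefore fail on every pair of the sequence (a_{q_m})_m, contradicting
   thickness. *)

From Pilot Require Import Defs.
From mathcomp Require Import all_boot all_order all_algebra.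
From Stdlib Require Import FunctionalExtensionality ClassicalEpsilon Classical.
From mathcomp Require Import lra.
Set Implicit Arguments. Unset Strict Implicit. Unset Printing Implicit Defensive.
Import Order.TTheory GRing.Theory Num.Theory.

Fixpoint rename_term (L : signature) (V W : Type) (f : V -> W) (t : term L V) :
    term L W :=
  match t with
  | tvar v => tvar L (f v)
  | tapp g args => @tapp L W g (fun k => rename_term f (args k))
  end.

Fixpoint rename_formula (L : signature) (V : Type) (phi : formula L V) :
    forall W, (V -> W) -> formula L W :=
  match phi in formula _ V0 return forall W, (V0 -> W) -> formula L W with
  | Defs.frel _ r args =>
      fun W f => @Defs.frel L W r (fun k => rename_term f (args k))
  | feq _ t1 t2 => fun W f => feq (rename_term f t1) (rename_term f t2)
  | fneg _ p => fun W f => fneg (rename_formula p f)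
  | fand _ p q => fun W f => fand (rename_formula p f) (rename_formula q f)
  | fex _ p => fun W f => fex (rename_formula p (option_map f))
  end.

Section Renaming.
Variables (L : signature) (M : structure L).

Lemma teval_rename (V W : Type) (f : V -> W) (e : V -> M) (e' : W -> M) :
  (forall v, e' (f v) = e v) -> forall t, teval e' (rename_term f t) = teval e t.
Proof.
move=> efE; elim=> [v|g args IH] /=; first exact: efE.
by congr (finterp _ _ _ _); apply: functional_extensionality.
Qed.

Lemma sat_rename (V : Type) (phi : formula L V) W (f : V -> W)
    (e : V -> M) (e' : W -> M) :
  (forall v, e' (f v) = e v) -> sat (rename_formula phi f) e' <-> sat phi e.
Proof.
elim: phi W f e e' => {V} [V r args|V t1 t2|V p IH|V p IHp q IHq|V p IH]
  W f e e' efE /=.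
- suff -> : (fun k => teval e' (rename_term f (args k))) =
            (fun k => teval e (args k)) by [].
  by apply: functional_extensionality => k; apply: teval_rename.
- by rewrite !(teval_rename efE).
- by rewrite (IH _ _ _ _ efE).
- by rewrite (IHp _ _ _ _ efE) (IHq _ _ _ _ efE).
- have IHm m : sat (rename_formula p (option_map f))
      (fun o => if o is Some w then e' w else m) <->
    sat p (fun o => if o is Some v then e v else m) by apply: IH; case.
  by split=> -[m /IHm sat_m]; exists m.
Qed.

Lemma psat_ext (A : M -> Prop) (V : Type) (phi : pformula A V) (e e' : V -> M) :
  e =1 e' -> psat phi e <-> psat phi e'.
Proof. by move=> /functional_extensionality ->. Qed.

End Renaming.

Local Open Scope ring_scope.

Definition params (L : signature) (M : structure L) (S : M -> Prop) (X : Type)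
    (a : rat -> X -> M) (J : seq rat) : M -> Prop :=
  fun m => S m \/ exists (j : rat) (x : X), j \in J /\ a j x = m.

Section Relabel.
Variables (L : signature) (M : structure L) (S : M -> Prop) (X : Type).
Variable a : rat -> X -> M.
Hypothesis a_indisc : indiscernible S a.

Lemma indiscernible_relabel (Y : Type) (p : Y -> rat) (c : Y -> X) (P : seq rat)
    (h : rat -> rat) :
  (forall y, p y \in P) -> {in P &, {homo h : u v / u < v}} ->
  forall phi : pformula S Y,
  psat phi (fun y => a (p y) (c y)) <-> psat phi (fun y => a (h (p y)) (c y)).
Proof.
move=> pP h_homo phi.
(* A variable at position p y becomes the variable of rank index (p y) s in
   the increasing enumeration s of P; both i and h \o i then list increasing
   indices, to which indiscernibility applies. *)
pose s := sort <=%O (undup P).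
have p_s y : p y \in s by rewrite mem_sort mem_undup.
have idx_lt y : (index (p y) s < size s)%N by rewrite index_mem.
pose i (m : 'I_(size s)) := nth 0 s m.
have i_idx y : i (Ordinal (idx_lt y)) = p y by apply: nth_index.
have i_inc : increasing i.
  move=> m m' mm'; rewrite /i lt_sorted_ltn_nth ?inE //.
  by rewrite sort_lt_sorted undup_uniq.
have hi_inc : increasing (h \o i).
  move=> m m' /i_inc; apply: h_homo; rewrite -mem_undup -(mem_sort <=%O);
  exact: mem_nth.
pose phi' : pformula S ('I_(size s) * X) := rename_formula phi
  (fun v => match v with
   | inl y => inl (Ordinal (idx_lt y), c y)
   | inr m => inr m
   end).
have phi'E (g : rat -> rat) : psat phi' (fun z => a (g (i z.1)) z.2) <->
    psat phi (fun y => a (g (p y)) (c y)).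
  by apply: sat_rename => -[y|//] /=; rewrite i_idx.
apply: iff_trans (iff_sym (phi'E id)) (iff_trans _ (phi'E h)).
exact: (a_indisc i_inc hi_inc phi').
Qed.

Lemma indiscernible_relabel_params (J : seq rat) (Y : Type) (p : Y -> rat)
    (c : Y -> X) (P : seq rat) (h : rat -> rat) :
  (forall y, p y \in P) -> {in J ++ P &, {homo h : u v / u < v}} ->
  {in J, h =1 id} ->
  forall phi : pformula (params S a J) Y,
  psat phi (fun y => a (p y) (c y)) <-> psat phi (fun y => a (h (p y)) (c y)).
Proof.
move=> pP h_homo hJ phi.
(* Each parameter a j x is turned into a new variable sitting at position j,
   which h leaves in place. *)
have witness (m : {m | params S a J m}) :
    {z : {jx : rat * X | jx.1 \in J} + {m | S m} |
     match z with inl jx => a (sval jx).1 (sval jx).2 | inr q => sval q end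
       = sval m}.
  apply: constructive_indefinite_description.
  case: m => m [Sm|[j [x [Jj ajx]]]].
  - by exists (inr (exist _ m Sm)).
  - by exists (inl (exist _ (j, x) Jj)).
pose Y' := (Y + {jx : rat * X | jx.1 \in J})%type.
pose p' (v : Y') := match v with inl y => p y | inr jx => (sval jx).1 end.
pose c' (v : Y') := match v with inl y => c y | inr jx => (sval jx).2 end.
have p'P v : p' v \in J ++ P.
  by case: v => [y|[[j x] Jj]]; rewrite mem_cat ?pP ?Jj ?orbT.
pose phi' : pformula S Y' := rename_formula phi (fun v => match v with
  | inl y => inl (inl y)
  | inr m =>
      match sval (witness m) with inl jx => inl (inr jx) | inr q => inr q end
  end).
have phi'E (g : rat -> rat) : {in J, g =1 id} ->
    psat phi' (fun v => a (g (p' v)) (c' v)) <->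
    psat phi (fun y => a (g (p y)) (c y)).
  move=> gJ; apply: sat_rename => -[y //|m] /=.
  by case: (witness m) => -[[[j x] Jj]|q] /= <- //=; rewrite gJ.
apply: iff_trans (iff_sym (phi'E id (fun _ _ => erefl)))
  (iff_trans _ (phi'E h hJ)).
exact: (indiscernible_relabel _ p'P h_homo).
Qed.

Lemma indiscernible_relabel_pairs (J : seq rat) (n : nat)
    (I I' K K' : 'I_n -> rat) (h : rat -> rat) :
  {homo h : u v / u < v} -> {in J, h =1 id} ->
  (forall t, h (I t) = K t) -> (forall t, h (I' t) = K' t) ->
  forall th : pformula (params S a J) (('I_n * X) + ('I_n * X)),
  psat th (pair_env (fun u => a (I u.1) u.2) (fun u => a (I' u.1) u.2)) <->
  psat th (pair_env (fun u => a (K u.1) u.2) (fun u => a (K' u.1) u.2)).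
Proof.
move=> h_homo hJ hI hI' th.
pose p := pair_env (fun u : 'I_n * X => I u.1) (fun u => I' u.1).
pose c := pair_env (@snd 'I_n X) (@snd 'I_n X).
have pP v : p v \in codom I ++ codom I'.
  by case: v => u; rewrite mem_cat codom_f ?orbT.
apply: (@iff_trans _ (psat th (fun v => a (p v) (c v)))).
  by apply: psat_ext; case.
apply: (@iff_trans _ (psat th (fun v => a (h (p v)) (c v)))).
  exact: indiscernible_relabel_params pP (in2W h_homo) hJ th.
by apply: psat_ext; case=> u /=; rewrite ?hI ?hI'.
Qed.

End Relabel.

Section Stretch.
Variables (n : nat) (l r x y : 'I_n -> rat).
Hypothesis lt_lr : forall t, l t < r t.
Hypothesis lt_rl : forall s t : 'I_n, (s < t)%N -> r s < l t.
Hypothesis le_lx : forall t, l t <= x t.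
Hypothesis lt_xy : forall t, x t < y t.
Hypothesis le_yr : forall t, y t <= r t.

Definition stretch (z : rat) : rat :=
  if [pick t | l t <= z <= r t] is Some t
  then x t + (y t - x t) * ((z - l t) / (r t - l t)) else z.

Lemma interval_uniq s t z : l s <= z <= r s -> l t <= z <= r t -> s = t.
Proof.
move=> /andP[ls sr] /andP[lt tr].
by case: (ltngtP s t) => [/lt_rl|/lt_rl|/val_inj //] ?; exfalso; lra.
Qed.

Lemma stretch_in t z : l t <= z <= r t ->
  stretch z = x t + (y t - x t) * ((z - l t) / (r t - l t)).
Proof.
move=> zt; rewrite /stretch; case: pickP => [s /interval_uniq/(_ zt) -> //|].
by move/(_ t); rewrite zt.
Qed.

Lemma stretch_out z : (forall t, ~~ (l t <= z <= r t)) -> stretch z = z.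
Proof.
by move=> z_out; rewrite /stretch; case: pickP => // t; rewrite (negbTE (z_out t)).
Qed.

Lemma stretch_l t : stretch (l t) = x t.
Proof.
rewrite (@stretch_in t) ?lexx ?ltW ?lt_lr //.
by rewrite subrr mul0r mulr0 addr0.
Qed.

Lemma stretch_r t : stretch (r t) = y t.
Proof.
rewrite (@stretch_in t) ?lexx ?ltW ?lt_lr //.
by rewrite divff ?mulr1 ?subrKC // subr_eq0 gt_eqF ?lt_lr.
Qed.

Lemma stretch_within t z : l t <= z <= r t -> x t <= stretch z <= y t.
Proof.
move=> zt; rewrite (stretch_in zt); have /andP[lz zr] := zt.
have lr := lt_lr t; have xy := lt_xy t.
have w_ge0 : 0 <= (z - l t) / (r t - l t) by rewrite divr_ge0 ?subr_ge0 // ltW.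
have w_le1 : (z - l t) / (r t - l t) <= 1.
  by rewrite ler_pdivrMr ?subr_gt0 // mul1r; lra.
apply/andP; split; nra.
Qed.

Lemma stretch_homo : {homo stretch : u v / u < v}.
Proof.
move=> u v uv.
case: (pickP (fun t => l t <= u <= r t)) => [s us|u_out];
case: (pickP (fun t => l t <= v <= r t)) => [t vt|v_out].
- case: (ltngtP s t) => [st|ts|/val_inj st].
  + have /andP[_ sy] := stretch_within us; have /andP[xt _] := stretch_within vt.
    by have := lt_rl st; have := le_lx t; have := le_yr s; lra.
  + have /andP[_ ur] := us; have /andP[lv _] := vt.
    by have := lt_rl ts; lra.
  subst t; rewrite (stretch_in us) (stretch_in vt).
  rewrite ltrD2l ltr_pM2l ?subr_gt0 //.
  by rewrite ltr_pM2r ?invr_gt0 ?subr_gt0 ?lt_lr // ltrD2r.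
- have v_out' t := negbT (v_out t); rewrite (stretch_out v_out').
  have /andP[_ sy] := stretch_within us; have /andP[lu _] := us.
  by move: (v_out' s); have := le_yr s; rewrite negb_and -!ltNge => ? /orP[]; lra.
- have u_out' t := negbT (u_out t); rewrite (stretch_out u_out').
  have /andP[xt _] := stretch_within vt; have /andP[_ vr] := vt.
  by move: (u_out' t); have := le_lx t; rewrite negb_and -!ltNge => ? /orP[]; lra.
- by rewrite !stretch_out // => t; apply/negbT.
Qed.

End Stretch.

Section QftpIntervals.
Variables (n : nat) (I I' : 'I_n -> rat) (J : seq rat).
Hypothesis I'_qftp : forall t : 'I_n,
  qftp_eq (fun j => j \in J \/ exists s : 'I_n, s != t /\ j = I s) (I' t) (I t).

Lemma qftp_intervals_ordered :
  increasing I -> forall s t : 'I_n, (s < t)%N -> I' s < I t.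
Proof.
move=> I_inc s t st; have ts : t != s by rewrite -val_eqE /= gtn_eqF.
have [-> _] := @I'_qftp s (I t) (or_intror (ex_intro _ t (conj ts erefl))).
exact: I_inc.
Qed.

Lemma qftp_intervals_avoid :
  (forall t, I t \notin J) -> forall t j, j \in J -> ~~ (I t <= j <= I' t).
Proof.
move=> IJ t j Jj; have [lt_I'j _] := @I'_qftp t j (or_introl Jj).
have Itj : I t != j by apply: contraNneq (IJ t) => ->.
apply/negP => /andP[Itlej jleI't].
have /lt_I'j : I t < j by rewrite lt_neqAle Itj.
lra.
Qed.

End QftpIntervals.

Lemma Theta_of_pair_sequence (L : signature) (M : structure L) (A : M -> Prop)
    (X : Type) (x y : X -> M) (c : nat -> X -> M) :
  (forall k l, (k < l)%N -> forall th : pformula A (X + X),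
     psat th (pair_env (c k) (c l)) -> psat th (pair_env x y)) ->
  Theta A x y.
Proof.
move=> cxy th _ th_thick; apply: NNPP => th_xy; apply: th_thick.
by exists c => k l /cxy/(_ th) ckl /ckl.
Qed.

Lemma lascar_dist_le1 (L : signature) (M : structure L) (A : M -> Prop)
    (X : Type) (x y : X -> M) :
  Theta A x y -> lascar_dist_le A x y 1.
Proof.
move=> xy; exists 1%N; split=> //.
by exists (fun i => if i is 0%N then x else y); do 2!split=> //; case.
Qed.

Definition unit_seq (m : nat) : rat := 1 - (m.+1)%:R^-1.

Lemma unit_seq_ge0 m : 0 <= unit_seq m.
Proof. by rewrite subr_ge0 invf_le1 ?ltr0Sn // ler1n. Qed.

Lemma unit_seq_lt1 m : unit_seq m < 1.
Proof. by rewrite ltrBlDr ltrDl invr_gt0 ltr0Sn. Qed.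

Lemma unit_seq_lt k l : (k < l)%N -> unit_seq k < unit_seq l.
Proof.
by move=> kl; rewrite ltrD2l ltrN2 ltf_pV2 ?posrE ?ltr0Sn // ltr_nat ltnS.
Qed.

Theorem lemma5p20 (L : signature) (K : Type) (M : structure L)
  (HM : monster K M)
  (S : M -> Prop) (HS : small K S)
  (X : Type) (HX : smallT K X)
  (a : rat -> X -> M) (Ha : indiscernible S a)
  (n : nat) (I : 'I_n -> rat) (HI : increasing I)
  (J : seq rat) (HIJ : forall t : 'I_n, I t \notin J)
  (I' : 'I_n -> rat) (HI' : forall t : 'I_n, (I t < I' t)%R)
  (Hq : forall t : 'I_n,
     qftp_eq (fun j => j \in J \/ exists s : 'I_n, s != t /\ j = I s) (I' t) (I t)) :
  lascar_dist_le
    (fun m : M => S m \/ exists (j : rat) (x : X), j \in J /\ a j x = m)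
    (fun p : 'I_n * X => a (I p.1) p.2)
    (fun p : 'I_n * X => a (I' p.1) p.2) 1.
Proof.
have lt_I'I := qftp_intervals_ordered Hq HI.
have J_out := qftp_intervals_avoid Hq HIJ.
pose q m t := I t + (I' t - I t) * unit_seq m.
apply/lascar_dist_le1/(Theta_of_pair_sequence (c := fun m u => a (q m u.1) u.2)).
move=> k l kl th th_q; have lt_II' t : 0 < I' t - I t by rewrite subr_gt0.
have le_Iq t : I t <= q k t.
  by rewrite lerDl mulr_ge0 ?unit_seq_ge0 ?ltW.
have lt_qq t : q k t < q l t by rewrite ltrD2l ltr_pM2l ?unit_seq_lt.
have le_qI' t : q l t <= I' t.
  by have := lt_II' t; have := unit_seq_lt1 l; rewrite /q; nra.
pose h := stretch I I' (q k) (q l).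
apply: (proj2 (indiscernible_relabel_pairs (h := h) (K := q k) (K' := q l)
  Ha _ _ _ _ th) th_q).
- exact: stretch_homo.
- by move=> j Jj; rewrite /h stretch_out // => t; apply: J_out.
- exact: stretch_l.
- exact: stretch_r.
Qed.
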